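(* Let $M(E,I)$ be a free partially commutative monoid and $\alpha\in M(E,I)$. Then the comma category $\mathfrak FM(E,I)/\alpha$ is a partially ordered set, i.e. between any two objects there is at most one morphism, and two objects with morphisms in both directions are equal.
   Context: $M(E,I)$ is the monoid generated by a set $E$ (possibly infinite) with relations $ab=ba$ for $(a,b)\in I$, $I\subseteq E\times E$ irreflexive and symmetric. For a monoid $M$, $\mathfrak FM$ has objects the elements of $M$ and morphisms $\beta\to\gamma$ the pairs $(f,g)$ with $g\beta f=\gamma$; composition $(f_2,g_2)\circ(f_1,g_1)=(f_1f_2,g_2g_1)$. The comma category $\mathfrak FM/\alpha$ has objects pairs $(\beta,\varphi)$ with $\varphi:\beta\to\alpha$ a morphism of $\mathfrak FM$, and morphisms $(\beta,\varphi)\to(\beta',\varphi')$ the morphisms $\psi:\beta\to\beta'$ with $\varphi'\circ\psi=\varphi$. *)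

From Stdlib Require Import List.
Import ListNotations.

(* Free partially commutative monoid M(E,I), modelled as words (list E)
   modulo the congruence generated by  ab = ba  for (a,b) in I. *)
Inductive tequiv {E : Type} (I : E -> E -> Prop) : list E -> list E -> Prop :=
| tequiv_refl  : forall u, tequiv I u u
| tequiv_sym   : forall u v, tequiv I u v -> tequiv I v u
| tequiv_trans : forall u v w, tequiv I u v -> tequiv I v w -> tequiv I u w
| tequiv_swap  : forall u v a b, I a b ->
    tequiv I (u ++ a :: b :: v) (u ++ b :: a :: v).

Definition indep_rel {E : Type} (I : E -> E -> Prop) : Prop :=
  (forall a, ~ I a a) /\ (forall a b, I a b -> I b a).

Definition FMhom {E : Type} (I : E -> E -> Prop)
  (beta gamma : list E) (f g : list E) : Prop :=
  tequiv I (g ++ beta ++ f) gamma.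

Definition FMcomp {E : Type} (fg2 fg1 : list E * list E) : list E * list E :=
  (fst fg1 ++ fst fg2, snd fg2 ++ snd fg1).

Definition FMhom_eq {E : Type} (I : E -> E -> Prop)
  (fg fg' : list E * list E) : Prop :=
  tequiv I (fst fg) (fst fg') /\ tequiv I (snd fg) (snd fg').

Definition comma_obj {E : Type} (I : E -> E -> Prop) (alpha : list E)
  (beta : list E) (phi : list E * list E) : Prop :=
  FMhom I beta alpha (fst phi) (snd phi).

Definition comma_hom {E : Type} (I : E -> E -> Prop)
  (beta : list E) (phi : list E * list E)
  (beta' : list E) (phi' : list E * list E)
  (psi : list E * list E) : Prop :=
  FMhom I beta beta' (fst psi) (snd psi) /\
  FMhom_eq I (FMcomp phi' psi) phi.

Definition comma_obj_eq {E : Type} (I : E -> E -> Prop)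
  (beta : list E) (phi : list E * list E)
  (beta' : list E) (phi' : list E * list E) : Prop :=
  tequiv I beta beta' /\ FMhom_eq I phi phi'.

(* Trace monoids are cancellative: deleting the first occurrence of a letter
   respects the commutation congruence, which gives left cancellation, and
   word reversal turns it into right cancellation.  A morphism psi of
   FM/alpha satisfies phi' o psi = phi, so both components of psi are
   obtained by cancelling those of phi' and hence are unique.  Word length is
   invariant, so morphisms in both directions between beta and beta' can only
   be pairs of empty words; then beta = beta' and phi = phi'.  None of this
   uses the hypotheses on I or the morphisms of the objects to alpha. *)

From Stdlib Require Import List.
From Stdlib Require Import Lia ClassicalEpsilon.
Import ListNotations.

Section TraceCancellation.
Context {E : Type} (I : E -> E -> Prop).

Lemma tequiv_length u v : tequiv I u v -> length u = length v.
Proof.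
  induction 1; try congruence.
  rewrite !length_app; simpl; lia.
Qed.

Lemma tequiv_app_l w u v : tequiv I u v -> tequiv I (w ++ u) (w ++ v).
Proof.
  induction 1.
  - apply tequiv_refl.
  - now apply tequiv_sym.
  - eapply tequiv_trans; eauto.
  - rewrite !app_assoc. now apply tequiv_swap.
Qed.

Lemma tequiv_rev u v : tequiv I u v -> tequiv I (rev u) (rev v).
Proof.
  induction 1.
  - apply tequiv_refl.
  - now apply tequiv_sym.
  - eapply tequiv_trans; eauto.
  - rewrite !rev_app_distr; simpl; rewrite <- !app_assoc; simpl.
    apply tequiv_sym, tequiv_swap; assumption.
Qed.

(* [E] has no decidable equality, so the letter test is classical. *)
Fixpoint remove_first (a : E) (w : list E) : list E :=
  match w with
  | [] => []
  | x :: w' =>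
      if excluded_middle_informative (x = a) then w' else x :: remove_first a w'
  end.

Lemma remove_first_app_in a u w :
  In a u -> remove_first a (u ++ w) = remove_first a u ++ w.
Proof.
  induction u as [|x u IH]; simpl; [tauto|].
  intros Hin. destruct (excluded_middle_informative (x = a)); [reflexivity|].
  simpl. rewrite IH; [reflexivity|]. destruct Hin; [congruence|assumption].
Qed.

Lemma remove_first_app_notin a u w :
  ~ In a u -> remove_first a (u ++ w) = u ++ remove_first a w.
Proof.
  induction u as [|x u IH]; simpl; [reflexivity|].
  intros Hnin. destruct (excluded_middle_informative (x = a)); [tauto|].
  rewrite IH; tauto.
Qed.

Lemma tequiv_remove_first a u v :
  tequiv I u v -> tequiv I (remove_first a u) (remove_first a v).
Proof.
  induction 1 as [| | |u v x y Ixy].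
  - apply tequiv_refl.
  - now apply tequiv_sym.
  - eapply tequiv_trans; eauto.
  - destruct (classic (In a u)) as [Hin|Hnin].
    + rewrite !remove_first_app_in by assumption. now apply tequiv_swap.
    + rewrite !remove_first_app_notin by assumption. apply tequiv_app_l; simpl.
      (* If [a] is one of the swapped letters the two sides coincide;
         otherwise the swap survives the deletion. *)
      repeat (destruct excluded_middle_informative; simpl); subst;
        try congruence; try apply tequiv_refl.
      exact (tequiv_swap I [] (remove_first a v) x y Ixy).
Qed.

Lemma tequiv_cancel_l w u v : tequiv I (w ++ u) (w ++ v) -> tequiv I u v.
Proof.
  induction w as [|a w IH]; simpl; [tauto|].
  intros Heq. apply IH.
  apply (tequiv_remove_first a) in Heq; simpl in Heq.
  destruct (excluded_middle_informative (a = a)); [exact Heq|congruence].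
Qed.

Lemma tequiv_cancel_r w u v : tequiv I (u ++ w) (v ++ w) -> tequiv I u v.
Proof.
  intros Heq. apply tequiv_rev in Heq. rewrite !rev_app_distr in Heq.
  apply tequiv_cancel_l, tequiv_rev in Heq.
  now rewrite !rev_involutive in Heq.
Qed.

End TraceCancellation.

Section CommaCategory.
Context {E : Type} (I : E -> E -> Prop).

Lemma FMhom_length beta gamma f g :
  FMhom I beta gamma f g -> length g + length beta + length f = length gamma.
Proof.
  intros Hfg. apply tequiv_length in Hfg.
  rewrite !length_app in Hfg. lia.
Qed.

Lemma FMhom_antisym beta beta' f g f' g' :
  FMhom I beta beta' f g -> FMhom I beta' beta f' g' -> f = [] /\ g = [].
Proof.
  intros Hfg%FMhom_length Hfg'%FMhom_length.
  split; apply length_zero_iff_nil; lia.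
Qed.

Lemma comma_hom_unique beta phi beta' phi' psi1 psi2 :
  comma_hom I beta phi beta' phi' psi1 ->
  comma_hom I beta phi beta' phi' psi2 ->
  FMhom_eq I psi1 psi2.
Proof.
  intros [_ [Hf1 Hg1]] [_ [Hf2 Hg2]]; simpl in *.
  split.
  - apply (tequiv_cancel_r I (fst phi')).
    eapply tequiv_trans; [exact Hf1|]. now apply tequiv_sym.
  - apply (tequiv_cancel_l I (snd phi')).
    eapply tequiv_trans; [exact Hg1|]. now apply tequiv_sym.
Qed.

Lemma comma_hom_antisym beta phi beta' phi' psi chi :
  comma_hom I beta phi beta' phi' psi ->
  comma_hom I beta' phi' beta phi chi ->
  comma_obj_eq I beta phi beta' phi'.
Proof.
  destruct psi as [f g].
  intros [Hpsi [Hf Hg]] [Hchi _]; simpl in *.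
  destruct (FMhom_antisym _ _ _ _ _ _ Hpsi Hchi); subst f g.
  unfold FMhom in Hpsi; simpl in *. rewrite app_nil_r in Hpsi, Hg.
  split; [exact Hpsi|].
  split; now apply tequiv_sym.
Qed.

End CommaCategory.

Theorem mainTheorem13 (E : Type) (I : E -> E -> Prop) (HI : indep_rel I)
  (alpha : list E)
  (beta : list E) (phi : list E * list E)
  (beta' : list E) (phi' : list E * list E) :
  comma_obj I alpha beta phi ->
  comma_obj I alpha beta' phi' ->
  (forall psi1 psi2 : list E * list E,
      comma_hom I beta phi beta' phi' psi1 ->
      comma_hom I beta phi beta' phi' psi2 ->
      FMhom_eq I psi1 psi2) /\
  (forall psi chi : list E * list E,
      comma_hom I beta phi beta' phi' psi ->
      comma_hom I beta' phi' beta phi chi ->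
      comma_obj_eq I beta phi beta' phi').
Proof.
  intros _ _. split.
  - apply comma_hom_unique.
  - apply comma_hom_antisym.
Qed.
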